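(* A sentence $\phi$ in the language of Heyting Arithmetic $\mathbf{HA}$ is true in the standard interpretation in the doctrine of variations $\Psi_{\mathbf{PAsm}}$ (i.e. its interpretation is the top element of $\Psi_{\mathbf{PAsm}}(1)$) if and only if $\phi$ has a realizer in the sense of Kleene's number realizability.
   Context: $\mathbf{PAsm}$ is the category of partitioned assemblies: objects $(P,T)$ with $P$ a set and $T:P\to\mathbb N$ a function; arrows functions $f$ such that for some $t$, $\varphi_t(T(x))$ is defined and equals $T'(f(x))$ for all $x$ ($\varphi_t$ the $t$-th partial recursive function). $\Psi_{\mathbf{PAsm}}$ sends $A$ to the poset reflection of $\mathbf{PAsm}/A$, reindexing by weak pullback; it is an arithmetic weak hyperdoctrine (Heyting fibres, quantifiers along projections, equality predicates, and a parameterized natural number object $\mathbf N=(\mathbb N,\mathrm{id})$ satisfying induction). The standard interpretation of $\mathbf{HA}$ in $\Psi_{\mathbf{PAsm}}$ takes $\mathbf N$ as domain, interprets the arithmetic operations by the corresponding arrows on $\mathbf N$, and interprets connectives, quantifiers and equality by the corresponding operations of the doctrine. Kleene realizability $m\Vdash\phi$ is the standard number realizability relation for $\mathbf{HA}$-sentences. *)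

From Stdlib Require Import Arith.

Set Implicit Arguments.

Fixpoint tri (k : nat) : nat := match k with 0 => 0 | S k' => S k' + tri k' end.
Definition cpair (x y : nat) : nat := tri (x + y) + y.

Inductive prf : Type :=
| PZero | PSucc | PId | PFst | PSnd
| PPair (f g : prf)
| PComp (f g : prf)
| PRec (f g : prf)
| PMin (f : prf).

Inductive eval : prf -> nat -> nat -> Prop :=
| ev_zero n : eval PZero n 0
| ev_succ n : eval PSucc n (S n)
| ev_id n : eval PId n n
| ev_fst a b : eval PFst (cpair a b) a
| ev_snd a b : eval PSnd (cpair a b) b
| ev_pair f g n a b : eval f n a -> eval g n b -> eval (PPair f g) n (cpair a b)
| ev_comp f g n b c : eval g n b -> eval f b c -> eval (PComp f g) n c
| ev_rec0 f g x a : eval f x a -> eval (PRec f g) (cpair x 0) a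
| ev_recS f g x y b c :
    eval (PRec f g) (cpair x y) b -> eval g (cpair x (cpair y b)) c ->
    eval (PRec f g) (cpair x (S y)) c
| ev_min f x y :
    eval f (cpair x y) 0 ->
    (forall z, z < y -> exists v, eval f (cpair x z) (S v)) ->
    eval (PMin f) x y.

Fixpoint code (c : prf) : nat :=
  match c with
  | PZero => cpair 0 0
  | PSucc => cpair 1 0
  | PId => cpair 2 0
  | PFst => cpair 3 0
  | PSnd => cpair 4 0
  | PPair f g => cpair 5 (cpair (code f) (code g))
  | PComp f g => cpair 6 (cpair (code f) (code g))
  | PRec f g => cpair 7 (cpair (code f) (code g))
  | PMin f => cpair 8 (code f)
  end.

(* phi t x y  :<->  phi_t(x) is defined and equals y
   (numbers that are not codes index the empty function) *)
Definition phi (t x y : nat) : Prop := exists c, code c = t /\ eval c x y.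

Record asm : Type := Asm { car : Type; tr : car -> nat }.

Definition tracked (A B : asm) (f : car A -> car B) : Prop :=
  exists t, forall x, phi t (tr A x) (tr B (f x)).

Definition one_asm : asm := @Asm unit (fun _ => 0).
Definition N_asm : asm := @Asm nat (fun n => n).
Definition prod_asm (A B : asm) : asm :=
  @Asm (car A * car B) (fun p => cpair (tr A (fst p)) (tr B (snd p))).

(* contexts of n variables: N^n = (...((1 x N) x N) ... x N) ;
   de Bruijn index 0 is the last component *)
Fixpoint ctxobj (n : nat) : asm :=
  match n with 0 => one_asm | S n' => prod_asm (ctxobj n') N_asm end.

(* Psi_PAsm(A) : poset reflection of the slice PAsm/A                   *)
Record over (A : asm) : Type := Over {
  dom : asm;
  omap : car dom -> car A;
  omap_tr : tracked dom A omap }.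

Definition leq (A : asm) (X Y : over A) : Prop :=
  exists h : car (dom X) -> car (dom Y),
    tracked (dom X) (dom Y) h /\ forall x, omap Y (h x) = omap X x.

Definition equiv (A : asm) (X Y : over A) : Prop := leq X Y /\ leq Y X.

Lemma id_tracked (A : asm) : tracked A A (fun x => x).
Proof. exists (code PId); intro x; exists PId; split; [reflexivity| constructor]. Qed.

Definition top_over (A : asm) : over A := @Over A A (fun x => x) (id_tracked A).

Definition pb_asm (B C : asm) (A : Type) (g : car B -> A) (f : car C -> A) : asm :=
  @Asm {p : car B * car C | g (fst p) = f (snd p)}
       (fun p => cpair (tr B (fst (proj1_sig p))) (tr C (snd (proj1_sig p)))).

Lemma pb_fst_tracked (B C : asm) (A : Type) (g : car B -> A) (f : car C -> A) :
  tracked (pb_asm B C g f) B (fun p => fst (proj1_sig p)).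
Proof. exists (code PFst); intro x; exists PFst; split; [reflexivity| constructor]. Qed.

(* reindexing along g : B -> A, by (weak) pullback *)
Definition reindex (A B : asm) (g : car B -> car A) (X : over A) : over B :=
  @Over B (pb_asm B (dom X) g (omap X)) (fun p => fst (proj1_sig p))
        (pb_fst_tracked B (dom X) g (omap X)).

Definition delta_N : over (prod_asm N_asm N_asm).
Proof.
  refine (@Over (prod_asm N_asm N_asm) N_asm (fun k => (k, k)) _).
  exists (code (PPair PId PId)); intro x; exists (PPair PId PId); split;
    [reflexivity| simpl; constructor; constructor].
Defined.

Inductive term (n : nat) : Type :=
| TVar (i : nat) (_ : i < n)
| TZero
| TSucc (t : term n)
| TPlus (s t : term n)
| TMult (s t : term n).

Inductive form : nat -> Type :=
| FEq n (s t : term n) : form n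
| FBot n : form n
| FAnd n (p q : form n) : form n
| FOr n (p q : form n) : form n
| FImp n (p q : form n) : form n
| FAll n (p : form (S n)) : form n
| FEx n (p : form (S n)) : form n.

Fixpoint lookup (n : nat) : car (ctxobj n) -> nat -> nat :=
  match n return car (ctxobj n) -> nat -> nat with
  | 0 => fun _ _ => 0
  | S n' => fun g i => match i with
                       | 0 => snd g
                       | S i' => lookup n' (fst g) i'
                       end
  end.

Fixpoint teval (n : nat) (t : term n) (g : car (ctxobj n)) : nat :=
  match t with
  | @TVar _ i _ => lookup n g i
  | TZero _ => 0
  | TSucc t => S (teval t g)
  | TPlus s t => teval s g + teval t g
  | TMult s t => teval s g * teval t g
  end.

Definition ctx_proj (n : nat) : car (ctxobj (S n)) -> car (ctxobj n) :=
  fun g => fst g.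

(* The standard interpretation of HA in Psi_PAsm: the interpretation of *)
(* each formula in context n is an element of Psi(N^n), determined (up  *)
(* to the equivalence of the poset reflection) by the doctrine          *)
(* operations, given by their universal properties.                     *)
Record std_interp (I : forall n, form n -> over (ctxobj n)) : Prop := {
  si_eq : forall n (s t : term n),
      equiv (I n (FEq s t))
            (@reindex (prod_asm N_asm N_asm) (ctxobj n) (fun g => (teval s g, teval t g)) delta_N);
  si_bot : forall n (Z : over (ctxobj n)), leq (I n (FBot n)) Z;
  si_and : forall n (p q : form n) (Z : over (ctxobj n)),
      leq Z (I n (FAnd p q)) <-> (leq Z (I n p) /\ leq Z (I n q));
  si_or : forall n (p q : form n) (Z : over (ctxobj n)),
      leq (I n (FOr p q)) Z <-> (leq (I n p) Z /\ leq (I n q) Z);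
  (* Heyting implication: Z <= (p => q)  iff  Z /\ p <= q,
     the meet being expressed by its universal property *)
  si_imp : forall n (p q : form n) (Z : over (ctxobj n)),
      leq Z (I n (FImp p q)) <->
      (forall W : over (ctxobj n), leq W Z -> leq W (I n p) -> leq W (I n q));
  si_all : forall n (p : form (S n)) (Z : over (ctxobj n)),
      leq Z (I n (FAll p)) <-> leq (@reindex _ (ctxobj (S n)) (@ctx_proj n) Z) (I (S n) p);
  si_ex : forall n (p : form (S n)) (Z : over (ctxobj n)),
      leq (I n (FEx p)) Z <-> leq (I (S n) p) (@reindex _ (ctxobj (S n)) (@ctx_proj n) Z) }.

Fixpoint realizes (n : nat) (f : form n) : car (ctxobj n) -> nat -> Prop :=
  match f in form n return car (ctxobj n) -> nat -> Prop with
  | FEq s t => fun g _ => teval s g = teval t g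
  | FBot _ => fun _ _ => False
  | FAnd p q => fun g m =>
      exists a b, m = cpair a b /\ realizes p g a /\ realizes q g b
  | FOr p q => fun g m =>
      (exists a, m = cpair 0 a /\ realizes p g a) \/
      (exists k a, m = cpair (S k) a /\ realizes q g a)
  | FImp p q => fun g m =>
      forall a, realizes p g a -> exists b, phi m a b /\ realizes q g b
  | @FAll n' p => fun g m =>
      forall k, exists b, phi m k b /\ realizes p ((g, k) : car (ctxobj (S n'))) b
  | @FEx n' p => fun g m =>
      exists k a, m = cpair k a /\ realizes p ((g, k) : car (ctxobj (S n'))) a
  end.

(* Any two standard interpretations agree up to equivalence, since each clause
   of [std_interp] is a universal property fixing the interpretation of a
   compound formula from those of its parts. Kleene realizability itself is a
   standard interpretation: interpret [phi] over [N^n] by the assembly of pairs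
   [(g, m)] with [m] realizing [phi[g]], tracked by [<g, m>]. For a closed
   formula, an arrow from the terminal object into this assembly is exactly a
   realizer. The clauses for implication and the universal quantifier need a
   universal function and the s-m-n theorem for the numbering [phi]; the
   universal function runs an abstract machine for [eval] whose step function
   is primitive recursive. *)

From Stdlib Require Import Arith Lia List Wf_nat IndefiniteDescription.
From Stdlib Require Cantor.
Import ListNotations.

Definition fstn (n : nat) : nat := fst (Cantor.of_nat n).
Definition sndn (n : nat) : nat := snd (Cantor.of_nat n).

Lemma cpair_to_nat x y : cpair x y = Cantor.to_nat (x, y).
Proof. unfold cpair, Cantor.to_nat. rewrite (Nat.add_comm y x), Nat.add_comm. f_equal. Qed.

Lemma cpair_fstn_sndn n : cpair (fstn n) (sndn n) = n.
Proof.
  rewrite cpair_to_nat. unfold fstn, sndn. rewrite <- surjective_pairing.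
  apply Cantor.cancel_to_of.
Qed.

Lemma fstn_cpair a b : fstn (cpair a b) = a.
Proof. unfold fstn. rewrite cpair_to_nat, Cantor.cancel_of_to. reflexivity. Qed.

Lemma sndn_cpair a b : sndn (cpair a b) = b.
Proof. unfold sndn. rewrite cpair_to_nat, Cantor.cancel_of_to. reflexivity. Qed.

Lemma cpair_inj a b c d : cpair a b = cpair c d -> a = c /\ b = d.
Proof.
  intro E. split.
  - rewrite <- (fstn_cpair a b), E. apply fstn_cpair.
  - rewrite <- (sndn_cpair a b), E. apply sndn_cpair.
Qed.

Arguments cpair : simpl never.
Arguments fstn : simpl never.
Arguments sndn : simpl never.

(** * Primitive recursive expressions *)

Inductive pexp : Type :=
| EVar | EZ | ES (a : pexp) | EPr (a b : pexp) | EFs (a : pexp) | ESn (a : pexp)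
| ECmp (f a : pexp) | EIter (f k x : pexp) | EIfz (c a b : pexp) | EPred (a : pexp).

Fixpoint denote (e : pexp) (n : nat) : nat :=
  match e with
  | EVar => n
  | EZ => 0
  | ES a => S (denote a n)
  | EPr a b => cpair (denote a n) (denote b n)
  | EFs a => fstn (denote a n)
  | ESn a => sndn (denote a n)
  | ECmp f a => denote f (denote a n)
  | EIter f k x => Nat.iter (denote k n) (denote f) (denote x n)
  | EIfz c a b => match denote c n with 0 => denote a n | S _ => denote b n end
  | EPred a => pred (denote a n)
  end.

Definition iter_prf (f : prf) : prf := PRec PId (PComp f (PComp PSnd PSnd)).
Definition ifz_prf : prf := PRec PFst (PComp PSnd PFst).
Definition pred_prf : prf := PRec PZero (PComp PFst PSnd).

Fixpoint compile (e : pexp) : prf :=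
  match e with
  | EVar => PId
  | EZ => PZero
  | ES a => PComp PSucc (compile a)
  | EPr a b => PPair (compile a) (compile b)
  | EFs a => PComp PFst (compile a)
  | ESn a => PComp PSnd (compile a)
  | ECmp f a => PComp (compile f) (compile a)
  | EIter f k x => PComp (iter_prf (compile f)) (PPair (compile x) (compile k))
  | EIfz c a b => PComp ifz_prf (PPair (PPair (compile a) (compile b)) (compile c))
  | EPred a => PComp pred_prf (PPair PZero (compile a))
  end.

Lemma eval_fstn n : eval PFst n (fstn n).
Proof. rewrite <- (cpair_fstn_sndn n) at 1. constructor. Qed.

Lemma eval_sndn n : eval PSnd n (sndn n).
Proof. rewrite <- (cpair_fstn_sndn n) at 1. constructor. Qed.

Lemma eval_iter_prf f F x k :
  (forall n, eval f n (F n)) -> eval (iter_prf f) (cpair x k) (Nat.iter k F x).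
Proof.
  intro HF. induction k as [|k IH]; [repeat constructor|].
  econstructor; [exact IH|]. econstructor; [econstructor; constructor|]. apply HF.
Qed.

Lemma eval_ifz_prf a b c :
  eval ifz_prf (cpair (cpair a b) c) (match c with 0 => a | S _ => b end).
Proof.
  destruct c as [|c]; [repeat constructor|].
  induction c as [|c IH]; (econstructor; [|econstructor; constructor]); [repeat constructor|exact IH].
Qed.

Lemma eval_pred_prf k : eval pred_prf (cpair 0 k) (pred k).
Proof.
  destruct k as [|k]; [repeat constructor|].
  induction k as [|k IH]; (econstructor; [|econstructor; constructor]); [repeat constructor|exact IH].
Qed.

Lemma eval_compile e n : eval (compile e) n (denote e n).
Proof.
  revert n; induction e; intro n; cbn [compile denote].
  - constructor.
  - constructor.
  - econstructor; [apply IHe|constructor].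
  - constructor; auto.
  - econstructor; [apply IHe|apply eval_fstn].
  - econstructor; [apply IHe|apply eval_sndn].
  - econstructor; [apply IHe2|apply IHe1].
  - econstructor; [constructor; [apply IHe3|apply IHe2]|]. apply eval_iter_prf, IHe1.
  - econstructor; [repeat constructor; auto|]. apply eval_ifz_prf.
  - econstructor; [constructor; [constructor|apply IHe]|]. apply eval_pred_prf.
Qed.

Lemma eval_compile_eq e n v : denote e n = v -> eval (compile e) n v.
Proof. intros <-. apply eval_compile. Qed.

Fixpoint EConst (k : nat) : pexp := match k with 0 => EZ | S k => ES (EConst k) end.

Lemma denote_EConst k n : denote (EConst k) n = k.
Proof. induction k; simpl; auto. Qed.

Definition EAdd (a b : pexp) : pexp := EIter (ES EVar) b a.

Lemma denote_EAdd a b n : denote (EAdd a b) n = denote a n + denote b n.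
Proof.
  unfold EAdd. cbn [denote]. induction (denote b n) as [|k IH]; simpl; lia.
Qed.

Definition EMul (a b : pexp) : pexp :=
  EFs (EIter (EPr (EAdd (EFs EVar) (ESn EVar)) (ESn EVar)) b (EPr EZ a)).

Lemma denote_EMul a b n : denote (EMul a b) n = denote b n * denote a n.
Proof.
  unfold EMul. cbn [denote].
  enough (H : forall k, Nat.iter k (denote (EPr (EAdd (EFs EVar) (ESn EVar)) (ESn EVar)))
                          (cpair 0 (denote a n)) = cpair (k * denote a n) (denote a n))
    by (rewrite H; apply fstn_cpair).
  induction k as [|k IH]; [reflexivity|].
  rewrite Nat.iter_succ, IH. cbn [denote]. rewrite denote_EAdd. cbn [denote].
  rewrite fstn_cpair, sndn_cpair. f_equal. simpl. lia.
Qed.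

(* Pairing as an expression: iterate [<t, s> |-> <t + s + 1, s + 1>] from [<0, 0>]. *)
Definition tri_step : pexp := EPr (EAdd (EFs EVar) (ES (ESn EVar))) (ES (ESn EVar)).

Lemma iter_tri_step s : Nat.iter s (denote tri_step) (cpair 0 0) = cpair (tri s) s.
Proof.
  induction s as [|s IH]; [reflexivity|].
  rewrite Nat.iter_succ, IH. unfold tri_step. cbn [denote]. rewrite denote_EAdd.
  cbn [denote]. rewrite fstn_cpair, sndn_cpair. f_equal. simpl. lia.
Qed.

Definition ECp (a b : pexp) : pexp := EAdd (EFs (EIter tri_step (EAdd a b) (EPr EZ EZ))) b.

Lemma denote_ECp a b n : denote (ECp a b) n = cpair (denote a n) (denote b n).
Proof.
  unfold ECp. rewrite denote_EAdd. cbn [denote]. rewrite denote_EAdd.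
  rewrite iter_tri_step, fstn_cpair. reflexivity.
Qed.

Fixpoint ECase (t : pexp) (cs : list pexp) (d : pexp) : pexp :=
  match cs with
  | [] => d
  | c :: cs => EIfz t c (ECase (EPred t) cs d)
  end.

Lemma denote_ECase cs : forall t d n,
  denote (ECase t cs d) n = nth (denote t n) (map (fun e => denote e n) cs) (denote d n).
Proof.
  induction cs as [|c cs IH]; intros t d n; simpl.
  - destruct (denote t n); reflexivity.
  - destruct (denote t n) eqn:E; [reflexivity|]. rewrite IH. simpl. rewrite E. reflexivity.
Qed.

Arguments ECase : simpl never.

(** * A universal partial recursive function *)

(* An abstract machine for [eval]. A continuation is [0] (halt) or a frame
   [S <tag, <data, K>>]; the tags mean: 0 = evaluate the second half of a
   pair, 1 = pair with the stored first half, 2 = apply the outer function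
   of a composition, 3 = finish a recursion step, 4 = continue a
   minimization search. *)
Definition cfg_eval (c x K : nat) : nat := cpair 0 (cpair c (cpair x K)).
Definition cfg_ret (v K : nat) : nat := cpair 1 (cpair v K).
Definition frame (t d K : nat) : nat := S (cpair t (cpair d K)).

Definition mk_eval (c x K : pexp) : pexp := EPr EZ (EPr c (EPr x K)).
Definition mk_ret (v K : pexp) : pexp := EPr (EConst 1) (EPr v K).
Definition mk_frame (t : nat) (d K : pexp) : pexp := ES (EPr (EConst t) (EPr d K)).

Local Notation e_code := (EFs (ESn EVar)) (only parsing).
Local Notation e_arg := (EFs (ESn (ESn EVar))) (only parsing).
Local Notation e_cont := (ESn (ESn (ESn EVar))) (only parsing).
Local Notation e_sub := (ESn e_code) (only parsing).

Definition eval_step : pexp :=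
  ECase (EFs e_code)
   [ mk_ret EZ e_cont; mk_ret (ES e_arg) e_cont; mk_ret e_arg e_cont;
     mk_ret (EFs e_arg) e_cont; mk_ret (ESn e_arg) e_cont;
     mk_eval (EFs e_sub) e_arg (mk_frame 0 (EPr (ESn e_sub) e_arg) e_cont);
     mk_eval (ESn e_sub) e_arg (mk_frame 2 (EFs e_sub) e_cont);
     EIfz (ESn e_arg) (mk_eval (EFs e_sub) (EFs e_arg) e_cont)
          (mk_eval e_code (EPr (EFs e_arg) (EPred (ESn e_arg)))
             (mk_frame 3 (EPr (ESn e_sub) (EPr (EFs e_arg) (EPred (ESn e_arg)))) e_cont));
     mk_eval e_sub (EPr e_arg EZ) (mk_frame 4 (EPr e_sub (EPr e_arg EZ)) e_cont) ] EVar.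

Local Notation r_val := (EFs (ESn EVar)) (only parsing).
Local Notation r_cont := (ESn (ESn EVar)) (only parsing).
Local Notation r_frame := (EPred r_cont) (only parsing).
Local Notation r_data := (EFs (ESn r_frame)) (only parsing).
Local Notation r_rest := (ESn (ESn r_frame)) (only parsing).

Definition ret_step : pexp :=
  EIfz r_cont EVar
   (ECase (EFs r_frame)
     [ mk_eval (EFs r_data) (ESn r_data) (mk_frame 1 r_val r_rest);
       mk_ret (EPr r_data r_val) r_rest;
       mk_eval r_data r_val r_rest;
       mk_eval (EFs r_data) (EPr (EFs (ESn r_data)) (EPr (ESn (ESn r_data)) r_val)) r_rest;
       EIfz r_val (mk_ret (ESn (ESn r_data)) r_rest)
         (mk_eval (EFs r_data) (EPr (EFs (ESn r_data)) (ES (ESn (ESn r_data))))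
            (mk_frame 4 (EPr (EFs r_data) (EPr (EFs (ESn r_data)) (ES (ESn (ESn r_data)))))
               r_rest)) ] EVar).

Definition step_exp : pexp := EIfz (EFs EVar) eval_step ret_step.
Definition step : nat -> nat := denote step_exp.

Ltac unfold_step :=
  unfold step, step_exp, eval_step, ret_step, cfg_eval, cfg_ret, frame;
  repeat (cbn [denote]; rewrite ?denote_ECase, ?denote_EConst, ?fstn_cpair, ?sndn_cpair;
          cbn [map nth pred]);
  unfold mk_eval, mk_ret, mk_frame;
  repeat (cbn [denote]; rewrite ?denote_ECase, ?denote_EConst, ?fstn_cpair, ?sndn_cpair;
          cbn [map nth pred]).

Lemma step_zero x K : step (cfg_eval (code PZero) x K) = cfg_ret 0 K.
Proof. cbn [code]. unfold_step. reflexivity. Qed.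
Lemma step_succ x K : step (cfg_eval (code PSucc) x K) = cfg_ret (S x) K.
Proof. cbn [code]. unfold_step. reflexivity. Qed.
Lemma step_id x K : step (cfg_eval (code PId) x K) = cfg_ret x K.
Proof. cbn [code]. unfold_step. reflexivity. Qed.
Lemma step_fst a b K : step (cfg_eval (code PFst) (cpair a b) K) = cfg_ret a K.
Proof. cbn [code]. unfold_step. reflexivity. Qed.
Lemma step_snd a b K : step (cfg_eval (code PSnd) (cpair a b) K) = cfg_ret b K.
Proof. cbn [code]. unfold_step. reflexivity. Qed.
Lemma step_pair f g x K :
  step (cfg_eval (code (PPair f g)) x K) = cfg_eval (code f) x (frame 0 (cpair (code g) x) K).
Proof. cbn [code]. unfold_step. reflexivity. Qed.
Lemma step_comp f g x K :
  step (cfg_eval (code (PComp f g)) x K) = cfg_eval (code g) x (frame 2 (code f) K).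
Proof. cbn [code]. unfold_step. reflexivity. Qed.
Lemma step_rec0 f g x K :
  step (cfg_eval (code (PRec f g)) (cpair x 0) K) = cfg_eval (code f) x K.
Proof. cbn [code]. unfold_step. reflexivity. Qed.
Lemma step_recS f g x y K :
  step (cfg_eval (code (PRec f g)) (cpair x (S y)) K) =
  cfg_eval (code (PRec f g)) (cpair x y) (frame 3 (cpair (code g) (cpair x y)) K).
Proof. cbn [code]. unfold_step. reflexivity. Qed.
Lemma step_min f x K :
  step (cfg_eval (code (PMin f)) x K) =
  cfg_eval (code f) (cpair x 0) (frame 4 (cpair (code f) (cpair x 0)) K).
Proof. cbn [code]. unfold_step. reflexivity. Qed.
Lemma step_ret_pair1 v g x K :
  step (cfg_ret v (frame 0 (cpair g x) K)) = cfg_eval g x (frame 1 v K).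
Proof. unfold_step. reflexivity. Qed.
Lemma step_ret_pair2 a b K : step (cfg_ret b (frame 1 a K)) = cfg_ret (cpair a b) K.
Proof. unfold_step. reflexivity. Qed.
Lemma step_ret_comp v f K : step (cfg_ret v (frame 2 f K)) = cfg_eval f v K.
Proof. unfold_step. reflexivity. Qed.
Lemma step_ret_rec v g a y K :
  step (cfg_ret v (frame 3 (cpair g (cpair a y)) K)) = cfg_eval g (cpair a (cpair y v)) K.
Proof. unfold_step. reflexivity. Qed.
Lemma step_ret_min0 f x z K :
  step (cfg_ret 0 (frame 4 (cpair f (cpair x z)) K)) = cfg_ret z K.
Proof. unfold_step. reflexivity. Qed.
Lemma step_ret_minS v f x z K :
  step (cfg_ret (S v) (frame 4 (cpair f (cpair x z)) K)) =
  cfg_eval f (cpair x (S z)) (frame 4 (cpair f (cpair x (S z))) K).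
Proof. unfold_step. reflexivity. Qed.
Lemma step_halt v : step (cfg_ret v 0) = cfg_ret v 0.
Proof. unfold_step. reflexivity. Qed.

Definition reach (a b : nat) : Prop := exists s, Nat.iter s step a = b.

Lemma reach_refl a : reach a a.
Proof. exists 0; reflexivity. Qed.

Lemma reach_trans a b c : reach a b -> reach b c -> reach a c.
Proof. intros [s1 H1] [s2 H2]. exists (s2 + s1). rewrite Nat.iter_add, H1, H2. reflexivity. Qed.

Lemma reach_step a b : step a = b -> reach a b.
Proof. intro H; exists 1; exact H. Qed.

Lemma reach_min_search f x y K :
  (forall z, z < y -> exists v,
     forall K', reach (cfg_eval (code f) (cpair x z) K') (cfg_ret (S v) K')) ->
  reach (cfg_eval (code (PMin f)) x K)
        (cfg_eval (code f) (cpair x y) (frame 4 (cpair (code f) (cpair x y)) K)).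
Proof.
  intro Hbelow. eapply reach_trans; [apply reach_step, step_min|].
  induction y as [|y IH]; [apply reach_refl|].
  eapply reach_trans; [apply IH; intros z Hz; apply Hbelow; lia|].
  destruct (Hbelow y (Nat.lt_succ_diag_r y)) as [v Hv].
  eapply reach_trans; [apply Hv|]. apply reach_step, step_ret_minS.
Qed.

Fixpoint eval_reach c x y (H : eval c x y) {struct H} :
  forall K, reach (cfg_eval (code c) x K) (cfg_ret y K).
Proof.
  destruct H as [| | |a b|a b|f g n a b Hf Hg|f g n b d Hg Hf|f g x a Hf
                 |f g x y b d Hr Hg|f x y Hf Hbelow]; intro K.
  - apply reach_step, step_zero.
  - apply reach_step, step_succ.
  - apply reach_step, step_id.
  - apply reach_step, step_fst.
  - apply reach_step, step_snd.
  - eapply reach_trans; [apply reach_step, step_pair|].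
    eapply reach_trans; [apply (eval_reach _ _ _ Hf)|].
    eapply reach_trans; [apply reach_step, step_ret_pair1|].
    eapply reach_trans; [apply (eval_reach _ _ _ Hg)|].
    apply reach_step, step_ret_pair2.
  - eapply reach_trans; [apply reach_step, step_comp|].
    eapply reach_trans; [apply (eval_reach _ _ _ Hg)|].
    eapply reach_trans; [apply reach_step, step_ret_comp|].
    apply (eval_reach _ _ _ Hf).
  - eapply reach_trans; [apply reach_step, step_rec0|]. apply (eval_reach _ _ _ Hf).
  - eapply reach_trans; [apply reach_step, step_recS|].
    eapply reach_trans; [apply (eval_reach _ _ _ Hr)|].
    eapply reach_trans; [apply reach_step, step_ret_rec|].
    apply (eval_reach _ _ _ Hg).
  - eapply reach_trans.
    + apply reach_min_search. intros z Hz. destruct (Hbelow z Hz) as [v Hv].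
      exists v. exact (eval_reach _ _ _ Hv).
    + eapply reach_trans; [apply (eval_reach _ _ _ Hf)|]. apply reach_step, step_ret_min0.
Qed.

Definition run : pexp :=
  EIter step_exp (ESn EVar) (mk_eval (EFs (EFs EVar)) (ESn (EFs EVar)) EZ).
Definition halted : pexp :=
  EIfz (EFs EVar) (EConst 1)
    (EIfz (EPred (EFs EVar)) (EIfz (ESn (ESn EVar)) EZ (EConst 1)) (EConst 1)).
Definition univ : prf :=
  PComp (compile (ECmp (EFs (ESn EVar)) run))
        (PPair PId (PMin (compile (ECmp halted run)))).

Lemma denote_run c x s :
  denote run (cpair (cpair c x) s) = Nat.iter s step (cfg_eval c x 0).
Proof. unfold run, mk_eval. cbn [denote]. rewrite !fstn_cpair, !sndn_cpair. reflexivity. Qed.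

Lemma halted_01 C : denote halted C = 0 \/ denote halted C = 1.
Proof.
  unfold halted. cbn [denote]. rewrite !denote_EConst.
  destruct (fstn C) as [|[|]]; simpl; auto. destruct (sndn (sndn C)); auto.
Qed.

Lemma halted_cfg_ret C : denote halted C = 0 -> C = cfg_ret (fstn (sndn C)) 0.
Proof.
  unfold halted. cbn [denote]. rewrite !denote_EConst. intro H.
  destruct (fstn C) as [|[|k]] eqn:E1; simpl in H; try discriminate.
  destruct (sndn (sndn C)) eqn:E2; try discriminate.
  unfold cfg_ret. rewrite <- E1, <- E2, !cpair_fstn_sndn. reflexivity.
Qed.

Lemma halted_ret v : denote halted (cfg_ret v 0) = 0.
Proof. unfold halted, cfg_ret. cbn [denote]. rewrite !fstn_cpair, !sndn_cpair. reflexivity. Qed.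

Lemma iter_step_ret v k : Nat.iter k step (cfg_ret v 0) = cfg_ret v 0.
Proof. induction k; [reflexivity|]. rewrite Nat.iter_succ, IHk. apply step_halt. Qed.

(* The machine is deterministic and final configurations are fixed points,
   so every halting time yields the same output. *)
Lemma halted_iter_output C s s0 y :
  denote halted (Nat.iter s step C) = 0 -> Nat.iter s0 step C = cfg_ret y 0 ->
  Nat.iter s step C = cfg_ret y 0.
Proof.
  intros Hs Hs0. apply halted_cfg_ret in Hs. set (v := fstn (sndn _)) in Hs.
  destruct (Nat.le_ge_cases s s0) as [Hle|Hge].
  - replace s0 with ((s0 - s) + s) in Hs0 by lia.
    rewrite Nat.iter_add, Hs, iter_step_ret in Hs0.
    apply cpair_inj in Hs0 as [_ Hs0]. apply cpair_inj in Hs0 as [-> _]. exact Hs.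
  - replace s with ((s - s0) + s0) by lia. rewrite Nat.iter_add, Hs0. apply iter_step_ret.
Qed.

Lemma eval_PMin_least e x s0 :
  (forall n, denote e n = 0 \/ denote e n = 1) -> denote e (cpair x s0) = 0 ->
  exists s, denote e (cpair x s) = 0 /\ eval (PMin (compile e)) x s.
Proof.
  intros H01 Hs0.
  destruct (dec_inh_nat_subset_has_unique_least_element (fun s => denote e (cpair x s) = 0))
    as [s [[Hs Hleast] _]];
    [intro n; destruct (Nat.eq_dec (denote e (cpair x n)) 0); auto|exists s0; exact Hs0|].
  exists s. split; [exact Hs|]. constructor; [apply eval_compile_eq, Hs|].
  intros z Hz. exists 0. apply eval_compile_eq.
  destruct (H01 (cpair x z)) as [E|E]; [apply Hleast in E; lia|exact E].
Qed.

Theorem eval_univ c x y : eval c x y -> eval univ (cpair (code c) x) y.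
Proof.
  intro H. destruct (eval_reach _ _ _ H 0) as [s0 Hs0].
  destruct (eval_PMin_least (ECmp halted run) (cpair (code c) x) s0) as [s [Hs Hmin]].
  - intro n. apply halted_01.
  - cbn [denote]. rewrite denote_run, Hs0. apply halted_ret.
  - econstructor; [constructor; [constructor|exact Hmin]|].
    apply eval_compile_eq. cbn [denote] in Hs |- *. rewrite denote_run in Hs |- *.
    rewrite (halted_iter_output _ _ _ _ Hs Hs0). unfold cfg_ret.
    rewrite sndn_cpair, fstn_cpair. reflexivity.
Qed.

(** * Tracking by programs *)

Definition ptracked (A B : asm) (f : car A -> car B) : Prop :=
  exists c, forall x, eval c (tr A x) (tr B (f x)).

Lemma tracked_ptracked A B f : tracked A B f <-> ptracked A B f.
Proof.
  split.
  - intros [t Ht]. exists (PComp univ (PPair (compile (EConst t)) PId)).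
    intro x. destruct (Ht x) as [c [<- Hev]].
    econstructor; [constructor; [|constructor]|apply eval_univ, Hev].
    apply eval_compile_eq, denote_EConst.
  - intros [c Hc]. exists (code c). intro x. exists c. auto.
Qed.

Lemma leq_ptracked A (X Y : over A) :
  leq X Y <-> exists h, ptracked (dom X) (dom Y) h /\ forall x, omap Y (h x) = omap X x.
Proof.
  split; intros [h [Hh E]]; exists h; split; auto; apply tracked_ptracked; auto.
Qed.

Lemma omap_ptracked A (X : over A) : ptracked (dom X) A (omap X).
Proof. apply tracked_ptracked, omap_tr. Qed.

Lemma leq_refl A (X : over A) : leq X X.
Proof. exists (fun x => x). split; [apply id_tracked|reflexivity]. Qed.

Lemma leq_trans A (X Y Z : over A) : leq X Y -> leq Y Z -> leq X Z.
Proof.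
  rewrite !leq_ptracked. intros [h1 [[c1 T1] E1]] [h2 [[c2 T2] E2]].
  exists (fun x => h2 (h1 x)). split.
  - exists (PComp c2 c1). intro x. econstructor; [apply T1|apply T2].
  - intro x. rewrite E2, E1. reflexivity.
Qed.

Arguments leq_refl {A} X.
Arguments leq_trans {A X} Y {Z}.

Lemma equiv_sym {A} {X Y : over A} : equiv X Y -> equiv Y X.
Proof. intros [H1 H2]; split; assumption. Qed.

Lemma equiv_trans {A} {X Y Z : over A} : equiv X Y -> equiv Y Z -> equiv X Z.
Proof. intros [H1 H2] [H3 H4]; split; eapply leq_trans; eassumption. Qed.

Lemma leq_equiv_r {A} {X Y Z : over A} : equiv X Y -> (leq Z X <-> leq Z Y).
Proof. intros [H1 H2]; split; intro H; eapply leq_trans; eassumption. Qed.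

Lemma leq_equiv_l {A} {X Y Z : over A} : equiv X Y -> (leq X Z <-> leq Y Z).
Proof. intros [H1 H2]; split; intro H; eapply leq_trans; eassumption. Qed.

Lemma equiv_of_leq_r A (X Y : over A) : (forall Z, leq Z X <-> leq Z Y) -> equiv X Y.
Proof. intro H; split; [apply H|apply H]; apply leq_refl. Qed.

Lemma equiv_of_leq_l A (X Y : over A) : (forall Z, leq X Z <-> leq Y Z) -> equiv X Y.
Proof. intro H; split; [apply H|apply H]; apply leq_refl. Qed.

Lemma reindex_mono A B (g : car B -> car A) (X Y : over A) :
  leq X Y -> leq (reindex B g X) (reindex B g Y).
Proof.
  rewrite !leq_ptracked. intros [h [[c Hc] E]].
  unshelve eexists (fun p => exist _ (fst (proj1_sig p), h (snd (proj1_sig p))) _).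
  - simpl. rewrite E. exact (proj2_sig p).
  - split; [|reflexivity]. exists (PPair PFst (PComp c PSnd)).
    intro p. constructor; [constructor|]. econstructor; [constructor|apply Hc].
Qed.

Definition smn (c : prf) (k : nat) : prf := PComp c (PPair (compile (EConst k)) PId).

(* 6 and 5 are the tags of [PComp] and [PPair] in [code]. *)
Definition const_code : pexp :=
  EIter (ECp (EConst 6) (ECp (EConst (code PSucc)) EVar)) EVar (EConst (code PZero)).
Definition smn_exp (c : prf) : pexp :=
  ECp (EConst 6) (ECp (EConst (code c))
    (ECp (EConst 5) (ECp const_code (EConst (code PId))))).

Lemma denote_const_code k : denote const_code k = code (compile (EConst k)).
Proof.
  unfold const_code. cbn [denote]. rewrite denote_EConst.
  induction k as [|k IH]; [reflexivity|].
  rewrite Nat.iter_succ, IH, !denote_ECp, !denote_EConst. reflexivity.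
Qed.

Lemma denote_smn_exp c k : denote (smn_exp c) k = code (smn c k).
Proof. unfold smn_exp. rewrite !denote_ECp, !denote_EConst, denote_const_code. reflexivity. Qed.

Lemma phi_smn c k a b : eval c (cpair k a) b -> phi (code (smn c k)) a b.
Proof.
  intro H. exists (smn c k). split; [reflexivity|].
  econstructor; [|exact H]. constructor; [|constructor].
  apply eval_compile_eq, denote_EConst.
Qed.

Fixpoint var_exp (i : nat) : pexp :=
  match i with 0 => ESn EVar | S i => ECmp (var_exp i) (EFs EVar) end.

Lemma denote_var_exp n (g : car (ctxobj n)) i :
  i < n -> denote (var_exp i) (tr _ g) = lookup n g i.
Proof.
  revert g i. induction n as [|n IH]; intros g i Hi; [lia|].
  destruct g as [g k], i as [|i]; simpl.
  - apply sndn_cpair.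
  - rewrite fstn_cpair. apply IH. lia.
Qed.

Lemma term_exp n (s : term n) : exists e, forall g, denote e (tr (ctxobj n) g) = teval s g.
Proof.
  induction s as [i Hi| |s [e He]|s1 [e1 H1] s2 [e2 H2]|s1 [e1 H1] s2 [e2 H2]].
  - exists (var_exp i). intro g. apply denote_var_exp, Hi.
  - exists EZ. reflexivity.
  - exists (ES e). intro g. simpl. rewrite He. reflexivity.
  - exists (EAdd e1 e2). intro g. rewrite denote_EAdd, H1, H2. reflexivity.
  - exists (EMul e2 e1). intro g. rewrite denote_EMul, H1, H2. reflexivity.
Qed.

(** * Realizability as a standard interpretation *)

Definition real_asm n (f : form n) : asm :=
  @Asm {p : car (ctxobj n) * nat | realizes f (fst p) (snd p)}
       (fun p => cpair (tr (ctxobj n) (fst (proj1_sig p))) (snd (proj1_sig p))).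

Lemma real_fst_tracked n (f : form n) :
  tracked (real_asm n f) (ctxobj n) (fun p => fst (proj1_sig p)).
Proof. exists (code PFst). intro p. exists PFst. split; [reflexivity|constructor]. Qed.

Definition real n (f : form n) : over (ctxobj n) :=
  @Over (ctxobj n) (real_asm n f) _ (real_fst_tracked n f).
Arguments real {n} f.

Lemma leq_real_intro n (f : form n) (Z : over (ctxobj n)) (m : car (dom Z) -> nat) (c : prf) :
  (forall z, realizes f (omap Z z) (m z)) ->
  (forall z, eval c (tr _ z) (cpair (tr _ (omap Z z)) (m z))) ->
  leq Z (real f).
Proof.
  intros Hm Hc. apply leq_ptracked.
  exists (fun z => exist _ (omap Z z, m z) (Hm z) : car (real_asm n f)).
  split; [exists c; exact Hc|reflexivity].
Qed.

Lemma leq_real_elim n (f : form n) (Z : over (ctxobj n)) : leq Z (real f) ->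
  exists (m : car (dom Z) -> nat) c,
    (forall z, realizes f (omap Z z) (m z)) /\
    (forall z, eval c (tr _ z) (cpair (tr _ (omap Z z)) (m z))).
Proof.
  rewrite leq_ptracked. intros [h [[c Hc] E]].
  exists (fun z => snd (proj1_sig (h z))), c. split; intro z; rewrite <- (E z).
  - exact (proj2_sig (h z)).
  - exact (Hc z).
Qed.

Lemma real_eq n (s t : term n) :
  equiv (real (FEq s t))
    (@reindex (prod_asm N_asm N_asm) (ctxobj n) (fun g => (teval s g, teval t g)) delta_N).
Proof.
  split.
  - apply leq_ptracked. destruct (term_exp n s) as [e He].
    unshelve eexists (fun x => exist _ (fst (proj1_sig x), teval s (fst (proj1_sig x))) _).
    + simpl. f_equal. symmetry. exact (proj2_sig x).
    + split; [|reflexivity]. exists (PPair PFst (PComp (compile e) PFst)).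
      intros [[g m] Hgm]. constructor; [constructor|].
      econstructor; [constructor|]. apply eval_compile_eq, He.
  - apply leq_real_intro with (m := fun z => snd (proj1_sig z)) (c := PId).
    + intros [[g k] E]. simpl in E |- *. injection E. congruence.
    + intros [[g k] E]. constructor.
Qed.

Lemma real_bot n (Z : over (ctxobj n)) : leq (real (FBot n)) Z.
Proof.
  apply leq_ptracked.
  exists (fun x : car (real_asm n (FBot n)) => False_rect _ (proj2_sig x)). split.
  - exists PZero. intros [p []].
  - intros [p []].
Qed.

Lemma real_and n (p q : form n) (Z : over (ctxobj n)) :
  leq Z (real (FAnd p q)) <-> leq Z (real p) /\ leq Z (real q).
Proof.
  split.
  - intro H. split; apply (leq_trans _ H).
    + apply leq_real_intro with (m := fun z => fstn (snd (proj1_sig z)))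
                                (c := compile (EPr (EFs EVar) (EFs (ESn EVar)))).
      * intros [[g m] Hgm]. simpl in Hgm |- *. destruct Hgm as (a & b & -> & Ha & _).
        rewrite fstn_cpair. exact Ha.
      * intros [[g m] Hgm]. apply eval_compile_eq. simpl. rewrite fstn_cpair, sndn_cpair. reflexivity.
    + apply leq_real_intro with (m := fun z => sndn (snd (proj1_sig z)))
                                (c := compile (EPr (EFs EVar) (ESn (ESn EVar)))).
      * intros [[g m] Hgm]. simpl in Hgm |- *. destruct Hgm as (a & b & -> & _ & Hb).
        rewrite sndn_cpair. exact Hb.
      * intros [[g m] Hgm]. apply eval_compile_eq. simpl. rewrite fstn_cpair, sndn_cpair. reflexivity.
  - intros [H1 H2]. apply leq_real_elim in H1 as (m1 & c1 & R1 & T1).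
    apply leq_real_elim in H2 as (m2 & c2 & R2 & T2).
    apply leq_real_intro with (m := fun z => cpair (m1 z) (m2 z))
                              (c := PPair (PComp PFst c1) (PPair (PComp PSnd c1) (PComp PSnd c2))).
    + intro z. exists (m1 z), (m2 z). auto.
    + intro z. constructor; [econstructor; [apply T1|constructor]|].
      constructor; (econstructor; [apply T1 || apply T2|constructor]).
Qed.

Lemma realizes_or_left n (p q : form n) g m :
  realizes (FOr p q) g m -> fstn m = 0 -> realizes p g (sndn m).
Proof.
  intros [(a & -> & Ha)|(k & a & -> & Ha)]; rewrite ?fstn_cpair, ?sndn_cpair; [auto|discriminate].
Qed.

Lemma realizes_or_right n (p q : form n) g m :
  realizes (FOr p q) g m -> fstn m <> 0 -> realizes q g (sndn m).
Proof.
  intros [(a & -> & Ha)|(k & a & -> & Ha)]; rewrite ?fstn_cpair, ?sndn_cpair; [tauto|auto].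
Qed.

(* A realizer [<i, a>] of a disjunction is sent along the tracker of the
   branch selected by [i]; the choice of tracker is made by [univ]. *)
Lemma real_or_elim n (p q : form n) (Z : over (ctxobj n)) :
  leq (real p) Z -> leq (real q) Z -> leq (real (FOr p q)) Z.
Proof.
  rewrite !leq_ptracked. intros (h1 & [c1 T1] & E1) (h2 & [c2 T2] & E2).
  exists (fun x : car (real_asm n (FOr p q)) => match x with exist _ (g, m) Hgm =>
     match Nat.eq_dec (fstn m) 0 with
     | left e => h1 (exist _ (g, sndn m) (realizes_or_left _ p q g m Hgm e))
     | right ne => h2 (exist _ (g, sndn m) (realizes_or_right _ p q g m Hgm ne))
     end end).
  split.
  - exists (PComp univ (compile (EPr (EIfz (EFs (ESn EVar)) (EConst (code c1)) (EConst (code c2)))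
                                     (EPr (EFs EVar) (ESn (ESn EVar)))))).
    intros [[g m] Hgm]. simpl (tr _ _).
    destruct (Nat.eq_dec (fstn m) 0) as [e|ne]; (econstructor; [apply eval_compile_eq|]).
    2: apply eval_univ, (T1 (exist _ (g, sndn m) _)).
    3: apply eval_univ, (T2 (exist _ (g, sndn m) _)).
    all: cbn [denote]; rewrite !fstn_cpair, !sndn_cpair; simpl.
    + rewrite e, denote_EConst. reflexivity.
    + destruct (fstn m); [contradiction|rewrite denote_EConst; reflexivity].
  - intros [[g m] Hgm]. destruct (Nat.eq_dec (fstn m) 0); [apply E1|apply E2].
Qed.

Lemma real_or n (p q : form n) (Z : over (ctxobj n)) :
  leq (real (FOr p q)) Z <-> leq (real p) Z /\ leq (real q) Z.
Proof.
  split; [|intros [H1 H2]; apply real_or_elim; assumption].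
  intro H. split; refine (leq_trans _ _ H).
  - apply leq_real_intro with (m := fun z => cpair 0 (snd (proj1_sig z)))
                              (c := compile (EPr (EFs EVar) (EPr EZ (ESn EVar)))).
    + intros [[g m] Hgm]. left. exists m. auto.
    + intros [[g m] Hgm]. apply eval_compile_eq. simpl. rewrite fstn_cpair, sndn_cpair. reflexivity.
  - apply leq_real_intro with (m := fun z => cpair 1 (snd (proj1_sig z)))
                              (c := compile (EPr (EFs EVar) (EPr (EConst 1) (ESn EVar)))).
    + intros [[g m] Hgm]. right. exists 0, m. auto.
    + intros [[g m] Hgm]. apply eval_compile_eq. simpl. rewrite fstn_cpair, sndn_cpair. reflexivity.
Qed.

Definition meet_asm n (Z : over (ctxobj n)) (p : form n) : asm :=
  @Asm {w : car (dom Z) * nat | realizes p (omap Z (fst w)) (snd w)}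
       (fun w => cpair (tr _ (fst (proj1_sig w))) (snd (proj1_sig w))).

Lemma meet_tracked n (Z : over (ctxobj n)) (p : form n) :
  tracked (meet_asm n Z p) (ctxobj n) (fun w => omap Z (fst (proj1_sig w))).
Proof.
  destruct (omap_ptracked _ Z) as [c0 T0]. apply tracked_ptracked. exists (PComp c0 PFst).
  intro w. econstructor; [constructor|apply T0].
Qed.

Definition meet_real {n} (Z : over (ctxobj n)) (p : form n) : over (ctxobj n) :=
  @Over _ (meet_asm n Z p) _ (meet_tracked n Z p).

Lemma meet_real_leq_l {n} (Z : over (ctxobj n)) p : leq (meet_real Z p) Z.
Proof.
  apply leq_ptracked. exists (fun w => fst (proj1_sig w)). split; [|reflexivity].
  exists PFst. intro w. constructor.
Qed.

Lemma meet_real_leq_r {n} (Z : over (ctxobj n)) p : leq (meet_real Z p) (real p).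
Proof.
  destruct (omap_ptracked _ Z) as [c0 T0].
  apply leq_real_intro with (m := fun w => snd (proj1_sig w)) (c := PPair (PComp c0 PFst) PSnd).
  - intro w. exact (proj2_sig w).
  - intro w. constructor; [econstructor; [constructor|apply T0]|constructor].
Qed.

Lemma real_imp n (p q : form n) (Z : over (ctxobj n)) :
  leq Z (real (FImp p q)) <->
  (forall W : over (ctxobj n), leq W Z -> leq W (real p) -> leq W (real q)).
Proof.
  split.
  - intros H W HWZ HWp.
    apply leq_real_elim in HWp as (m2 & c2 & R2 & T2).
    pose proof (leq_trans _ HWZ H) as HW. apply leq_real_elim in HW as (m1 & c1 & R1 & T1).
    set (b := fun w => constructive_indefinite_description _ (R1 w (m2 w) (R2 w))).
    apply leq_real_intro with (m := fun w => proj1_sig (b w))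
      (c := PPair (PComp PFst c1) (PComp univ (PPair (PComp PSnd c1) (PComp PSnd c2)))).
    + intro w. exact (proj2 (proj2_sig (b w))).
    + intro w. constructor; [econstructor; [apply T1|constructor]|].
      destruct (proj1 (proj2_sig (b w))) as [c [Hc Hev]].
      econstructor; [constructor; (econstructor; [apply T1 || apply T2|constructor])|].
      pose proof (eval_univ _ _ _ Hev) as E. rewrite Hc in E. exact E.
  - intro H. specialize (H _ (meet_real_leq_l Z p) (meet_real_leq_r Z p)).
    apply leq_real_elim in H as (mq & cq & Rq & Tq).
    destruct (omap_ptracked _ Z) as [c0 T0].
    apply leq_real_intro with (m := fun z => code (smn (PComp PSnd cq) (tr _ z)))
                              (c := PPair c0 (compile (smn_exp (PComp PSnd cq)))).
    + intros z a Ha. set (w := exist _ (z, a) Ha : car (dom (meet_real Z p))).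
      exists (mq w). split; [|exact (Rq w)].
      apply phi_smn. econstructor; [exact (Tq w)|constructor].
    + intro z. constructor; [apply T0|]. apply eval_compile_eq, denote_smn_exp.
Qed.

Lemma realizes_all_at {n} (p : form (S n)) (gk : car (ctxobj (S n)))
  (r : car (real_asm n (FAll p))) :
  ctx_proj gk = fst (proj1_sig r) ->
  exists b, phi (snd (proj1_sig r)) (snd gk) b /\ realizes p gk b.
Proof.
  destruct r as [[g m] H], gk as [g' k]. unfold ctx_proj. simpl. intros <-. apply H.
Qed.

Lemma reindex_real_all {n} (p : form (S n)) :
  leq (reindex (ctxobj (S n)) (@ctx_proj n) (real (FAll p))) (real p).
Proof.
  set (b := fun y : car (dom (reindex (ctxobj (S n)) (@ctx_proj n) (real (FAll p)))) =>
              constructive_indefinite_description _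
                (realizes_all_at p (fst (proj1_sig y)) (snd (proj1_sig y)) (proj2_sig y))).
  apply leq_real_intro with (m := fun y => proj1_sig (b y))
    (c := PPair PFst (PComp univ (compile (EPr (ESn (ESn EVar)) (ESn (EFs EVar)))))).
  - intro y. exact (proj2 (proj2_sig (b y))).
  - intro y. constructor; [constructor|].
    destruct (proj1 (proj2_sig (b y))) as [c [Hc Hev]].
    pose proof (eval_univ _ _ _ Hev) as E. rewrite Hc in E.
    econstructor; [apply eval_compile_eq|exact E].
    destruct y as [[[g k] r] e]. simpl. rewrite !fstn_cpair, !sndn_cpair. reflexivity.
Qed.

Lemma real_all n (p : form (S n)) (Z : over (ctxobj n)) :
  leq Z (real (FAll p)) <-> leq (reindex (ctxobj (S n)) (@ctx_proj n) Z) (real p).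
Proof.
  split.
  - intro H. exact (leq_trans _ (reindex_mono _ _ _ _ _ H) (reindex_real_all p)).
  - intro H. apply leq_real_elim in H as (mp & cp & Rp & Tp).
    destruct (omap_ptracked _ Z) as [c0 T0].
    set (X := PComp PSnd (PComp cp (PPair (PPair (PComp c0 PFst) PSnd) PFst))).
    apply leq_real_intro with (m := fun z => code (smn X (tr _ z)))
                              (c := PPair c0 (compile (smn_exp X))).
    + intros z k.
      set (y := exist _ ((omap Z z, k), z) eq_refl
                  : car (dom (reindex (ctxobj (S n)) (@ctx_proj n) Z))).
      exists (mp y). split; [|exact (Rp y)].
      apply phi_smn. unfold X.
      econstructor; [|constructor]. econstructor; [|exact (Tp y)].
      constructor; [constructor; [econstructor; [constructor|apply T0]|constructor]|constructor].
    + intro z. constructor; [apply T0|]. apply eval_compile_eq, denote_smn_exp.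
Qed.

Lemma realizes_ex_intro {n} (p : form (S n)) (gk : car (ctxobj (S n))) a :
  realizes p gk a -> realizes (FEx p) (fst gk) (cpair (snd gk) a).
Proof. destruct gk as [g k]. intro H. exists k, a. auto. Qed.

Lemma realizes_ex_elim {n} (p : form (S n)) g m :
  realizes (FEx p) g m -> realizes p ((g, fstn m) : car (ctxobj (S n))) (sndn m).
Proof. intros (k & a & -> & H). rewrite fstn_cpair, sndn_cpair. exact H. Qed.

Lemma real_leq_reindex_ex {n} (p : form (S n)) :
  leq (real p) (reindex (ctxobj (S n)) (@ctx_proj n) (real (FEx p))).
Proof.
  apply leq_ptracked.
  exists (fun x : car (real_asm (S n) p) => match x with exist _ (gk, a) H =>
    exist _ (gk, exist _ (fst gk, cpair (snd gk) a) (realizes_ex_intro p gk a H)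
                   : car (real_asm n (FEx p))) eq_refl
    : car (dom (reindex (ctxobj (S n)) (@ctx_proj n) (real (FEx p)))) end).
  split.
  - exists (compile (EPr (EFs EVar) (EPr (EFs (EFs EVar)) (EPr (ESn (EFs EVar)) (ESn EVar))))).
    intros [[[g k] a] H]. apply eval_compile_eq. simpl. rewrite !fstn_cpair, !sndn_cpair. reflexivity.
  - intros [[gk a] H]. reflexivity.
Qed.

Lemma real_ex n (p : form (S n)) (Z : over (ctxobj n)) :
  leq (real (FEx p)) Z <-> leq (real p) (reindex (ctxobj (S n)) (@ctx_proj n) Z).
Proof.
  split.
  - intro H. exact (leq_trans _ (real_leq_reindex_ex p) (reindex_mono _ _ _ _ _ H)).
  - rewrite !leq_ptracked. intros (h & [c T] & E).
    set (w := fun x : car (real_asm n (FEx p)) => match x with exist _ (g, m) H =>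
                exist _ ((g, fstn m), sndn m) (realizes_ex_elim p g m H)
                : car (real_asm (S n) p) end).
    exists (fun x => snd (proj1_sig (h (w x)))). split.
    + exists (PComp PSnd (PComp c
        (compile (EPr (EPr (EFs EVar) (EFs (ESn EVar))) (ESn (ESn EVar)))))).
      intros [[g m] H].
      econstructor; [econstructor; [apply eval_compile_eq|exact (T (w (exist _ (g, m) H)))]|].
      * simpl. rewrite !fstn_cpair, !sndn_cpair. reflexivity.
      * destruct (h _) as [[gk z] e]. constructor.
    + intros [[g m] H]. simpl. pose proof (E (w (exist _ (g, m) H))) as E'.
      destruct (h _) as [[gk z] e]. simpl in *. rewrite <- e, E'. reflexivity.
Qed.

Theorem real_std_interp : std_interp (fun n f => real f).
Proof.
  constructor.
  - exact real_eq.
  - exact real_bot.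
  - exact real_and.
  - exact real_or.
  - exact real_imp.
  - exact real_all.
  - exact real_ex.
Qed.

(** * Uniqueness of the standard interpretation *)

Theorem std_interp_unique {I J : forall n, form n -> over (ctxobj n)} :
  std_interp I -> std_interp J -> forall n (f : form n), equiv (I n f) (J n f).
Proof.
  intros HI HJ n f.
  induction f as [n s t|n|n p IHp q IHq|n p IHp q IHq|n p IHp q IHq|n p IHp|n p IHp].
  - exact (equiv_trans (si_eq HI s t) (equiv_sym (si_eq HJ s t))).
  - split; apply si_bot; assumption.
  - apply equiv_of_leq_r. intro Z.
    rewrite (si_and HI), (si_and HJ), (leq_equiv_r IHp), (leq_equiv_r IHq). reflexivity.
  - apply equiv_of_leq_l. intro Z.
    rewrite (si_or HI), (si_or HJ), (leq_equiv_l IHp), (leq_equiv_l IHq). reflexivity.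
  - apply equiv_of_leq_r. intro Z. rewrite (si_imp HI), (si_imp HJ).
    split; intros H W HWZ HWp;
      apply (leq_equiv_r IHq), H, (leq_equiv_r IHp); assumption.
  - apply equiv_of_leq_r. intro Z. rewrite (si_all HI), (si_all HJ), (leq_equiv_r IHp). reflexivity.
  - apply equiv_of_leq_l. intro Z. rewrite (si_ex HI), (si_ex HJ), (leq_equiv_l IHp). reflexivity.
Qed.

Lemma top_leq_real (f : form 0) :
  leq (top_over (ctxobj 0)) (real f) <-> exists m, realizes f tt m.
Proof.
  split.
  - intro H. apply leq_real_elim in H as (m & c & R & _). exists (m tt). exact (R tt).
  - intros [m Hm]. apply leq_real_intro with (m := fun _ => m) (c := compile (EPr EZ (EConst m))).
    + intros []. exact Hm.
    + intros []. apply eval_compile_eq. simpl. rewrite denote_EConst. reflexivity.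
Qed.

Theorem corollary5p2 :
  forall (I : forall n, form n -> over (ctxobj n)),
    std_interp I ->
    forall phi0 : form 0,
      leq (top_over (ctxobj 0)) (I 0 phi0) <->
      exists m : nat, realizes phi0 (tt : car (ctxobj 0)) m.
Proof.
  intros I HI phi0.
  rewrite (leq_equiv_r (std_interp_unique HI real_std_interp 0 phi0)).
  apply top_leq_real.
Qed.
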